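(* Let $M$ be a metric space and $X$ a non-zero Banach space. Let $(x_n)_{n\in\mathbb N}\subseteq M$ and $r_n>0$ be such that the open balls $B(x_n,r_n)$, $n\in\mathbb N$, are pairwise disjoint. Then for every Lipschitz map $F:M\to X$ and every $\varepsilon>0$ there exists a Lipschitz map $G:M\to X$ such that the Lipschitz constant of $F-G$ is less than $\varepsilon$ and $G(x_n)\neq G(x_m)$ for all $n\neq m$. *)

From HB Require Import structures.
From mathcomp Require Import all_boot all_order all_algebra.
From mathcomp Require Import all_classical all_reals all_analysis.
Set Implicit Arguments. Unset Strict Implicit. Unset Printing Implicit Defensive.
Import Order.TTheory GRing.Theory Num.Theory.
Import numFieldNormedType.Exports.
Local Open Scope classical_set_scope.
Local Open Scope ring_scope.

Definition klipschitz_m (R : realType) (M : metricType R) (X : normedModType R)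
  (k : R) (f : M -> X) : Prop :=
  forall x y : M, `| f x - f y | <= k * mdist x y.

Definition lipschitz_m (R : realType) (M : metricType R) (X : normedModType R)
  (f : M -> X) : Prop :=
  exists k : R, klipschitz_m k f.

(* the Lipschitz constant (the least k, which is attained) of f is < e *)
Definition lipconst_lt (R : realType) (M : metricType R) (X : normedModType R)
  (f : M -> X) (e : R) : Prop :=
  exists2 k : R, k < e & klipschitz_m k f.

From HB Require Import structures.
From mathcomp Require Import all_boot all_order all_algebra.
From mathcomp Require Import all_classical all_reals all_analysis.
From mathcomp Require Import lra.

Set Implicit Arguments.
Unset Strict Implicit.
Unset Printing Implicit Defensive.
Import Order.TTheory GRing.Theory Num.Theory.
Import numFieldNormedType.Exports.
Local Open Scope classical_set_scope.
Local Open Scope ring_scope.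

(* Fix a vector u with `|u| = eps/2 and look for G of the form
   G p = F p - phi p *: u with phi : M -> R 1-Lipschitz; then F - G is
   (eps/2)-Lipschitz and G is Lipschitz (klipschitzB, klipschitz_scale).
   The function phi glues "tents" of height w n centred at the x n: when
   w n + w m <= d(x n, x m), which holds for 0 < w n <= r n / 2 since the balls
   are disjoint (disjoint_balls_dist), the tents have disjoint supports, the
   glued function stays 1-Lipschitz and phi (x n) = w n (section Glue).
   It remains to choose the heights so that G (x n) = F (x n) - w n *: u are
   pairwise distinct (separating_heights): w n is chosen recursively
   (choice_with_history), avoiding the finitely many parameters t for which
   F (x n) - t *: u hits an earlier value; a line meets a finite set in
   finitely many points (line_avoids_finite).  The theorem comes last. *)

Section LipschitzVector.
Variables (R : realType) (M : metricType R) (X : normedModType R).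

Lemma klipschitzB (k l : R) (f g : M -> X) :
  klipschitz_m k f -> klipschitz_m l g ->
  klipschitz_m (k + l) (fun p => f p - g p).
Proof.
move=> fk gl p q; rewrite mulrDl.
have -> : f p - g p - (f q - g q) = (f p - f q) - (g p - g q).
  by rewrite !opprB !addrA addrAC [RHS]addrAC [f p - f q + _]addrAC.
by apply: le_trans (ler_normB _ _) _; apply: lerD.
Qed.

Lemma klipschitz_scale (phi : M -> R) (u : X) :
  (forall p q, `|phi p - phi q| <= mdist p q) ->
  klipschitz_m `|u| (fun p => phi p *: u).
Proof.
by move=> phi1 p q; rewrite -scalerBl normrZ mulrC ler_wpM2l.
Qed.

Lemma exists_vector_of_norm (c : R) :
  (exists v : X, v != 0) -> 0 <= c -> exists u : X, `|u| = c.
Proof.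
move=> [v v0] c0; exists ((c / `|v|) *: v).
by rewrite normrZ ger0_norm ?divfK ?normr_eq0 // divr_ge0.
Qed.

End LipschitzVector.

Section Tent.
Variables (R : realType) (M : metricType R).

Definition tent (c : M) (h : R) (p : M) : R := Num.max 0 (h - mdist c p).

Lemma tent_ge0 c h p : 0 <= tent c h p.
Proof. by rewrite le_max lexx. Qed.

Lemma tent_gt0E c h p : 0 < tent c h p -> tent c h p = h - mdist c p.
Proof.
by rewrite lt_max ltxx /= => hp; rewrite /tent max_r // ltW.
Qed.

Lemma tent_gt0_ball c h p : 0 < tent c h p -> mdist c p < h.
Proof. by rewrite lt_max ltxx /= subr_gt0. Qed.

Lemma tent_center c h : 0 <= h -> tent c h c = h.
Proof. by move=> h0; rewrite /tent mdistxx subr0 max_r. Qed.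

(* Tents are 1-Lipschitz: truncation at 0 and d(c, .) are both 1-Lipschitz. *)
Lemma tent_lip c h p q : `|tent c h p - tent c h q| <= mdist p q.
Proof.
have trunc (a b : R) : `|Num.max 0 a - Num.max 0 b| <= `|a - b|.
  have ab := ler_norm (a - b); have ba := ler_norm (b - a); rewrite distrC in ba.
  rewrite ler_norml; case: (leP 0 a) => a0; case: (leP 0 b) => b0;
    rewrite ?(max_r a0) ?(max_r b0) ?(max_l (ltW a0)) ?(max_l (ltW b0));
    apply/andP; split; lra.
apply: le_trans (trunc _ _) _.
have t1 := metric_triangle c p q; have t2 := metric_triangle c q p.
rewrite (metric_sym q p) in t2.
rewrite ler_norml; apply/andP; split; lra.
Qed.

(* A family of tents with centres c n and heights h n such that
   h n + h m <= d(c n, c m): their supports are disjoint, so they can be glued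
   into a single 1-Lipschitz function taking the value h n at c n. *)
Section Glue.
Variables (c : nat -> M) (h : nat -> R).
Hypothesis h_sep : forall n m, n <> m -> h n + h m <= mdist (c n) (c m).

Let b n := tent (c n) (h n).

Lemma tent_support_unique n m p : 0 < b n p -> 0 < b m p -> n = m.
Proof.
move=> /tent_gt0_ball pn /tent_gt0_ball pm; apply: contrapT => nm.
have := h_sep nm; have := metric_triangle (c n) p (c m).
rewrite (metric_sym (c m)) in pm; lra.
Qed.

(* Two points in two different supports are further apart than the sum of
   the values of the tents at them; this is what keeps the gluing 1-Lipschitz. *)
Lemma tents_far n m p q : n <> m -> 0 < b n p -> 0 < b m q ->
  b n p + b m q <= mdist p q.
Proof.
move=> nm pn qm; rewrite /b (tent_gt0E pn) (tent_gt0E qm).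
have := h_sep nm; have := metric_triangle (c n) p (c m).
have := metric_triangle p q (c m); rewrite (metric_sym q (c m)); lra.
Qed.

Definition glued_tent (p : M) : R :=
  if pselect (exists n, 0 < b n p) is left hp then b (proj1_sig (cid hp)) p
  else 0.

Lemma glued_tentE n p : (forall m, m <> n -> b m p = 0) -> glued_tent p = b n p.
Proof.
move=> others; rewrite /glued_tent; case: pselect => [hp|nhp].
  case: (cid hp) => m /= pm; case: (eqVneq m n) => [-> //|/eqP mn].
  by move: pm; rewrite others // ltxx.
apply/esym/eqP; rewrite eq_le tent_ge0 andbT leNgt.
by apply/negP => pn; apply: nhp; exists n.
Qed.

Lemma tent_other_center n m : 0 <= h n -> m <> n -> b m (c n) = 0.
Proof.
move=> h0 mn; have := h_sep mn; rewrite /b /tent => sep.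
by rewrite max_l //; lra.
Qed.

Lemma glued_tent_center n : 0 <= h n -> glued_tent (c n) = h n.
Proof.
move=> h0; rewrite (@glued_tentE n) /b ?tent_center // => m.
exact: tent_other_center.
Qed.

(* The glued function is still 1-Lipschitz: two points either see the same
   tent (or none), or lie in two different supports (use tents_far). *)
Lemma glued_tent_lip p q : `|glued_tent p - glued_tent q| <= mdist p q.
Proof.
have vanish n z : ~ 0 < b n z -> b n z = 0.
  by move=> nz; apply/eqP; rewrite eq_le tent_ge0 andbT leNgt; apply/negP.
have alone n z : 0 < b n z -> forall m, m <> n -> b m z = 0.
  by move=> nz m mn; apply: vanish => mz; apply: mn; apply: tent_support_unique mz nz.
have same n : (forall m, m <> n -> b m p = 0) -> (forall m, m <> n -> b m q = 0) ->
    `|glued_tent p - glued_tent q| <= mdist p q.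
  by move=> /glued_tentE -> /glued_tentE ->; apply: tent_lip.
have [[n pn]|nop] := pselect (exists n, 0 < b n p).
  have [[m qm mn]|noq] := pselect (exists2 m, 0 < b m q & m <> n).
    rewrite (glued_tentE (alone _ _ pn)) (glued_tentE (alone _ _ qm)).
    apply: le_trans (ler_normB _ _) _.
    rewrite !ger0_norm ?tent_ge0 //; exact: tents_far (nesym mn) pn qm.
  apply: (same n (alone _ _ pn)) => m mn; apply: vanish => qm.
  by apply: noq; exists m.
have p_out m : b m p = 0 by apply: vanish => pm; apply: nop; exists m.
have [[m qm]|noq] := pselect (exists m, 0 < b m q).
  by apply: (same m) (alone _ _ qm) => m' _; apply: p_out.
apply: (same 0%N) => m _; first exact: p_out.
by apply: vanish => qm; apply: noq; exists m.
Qed.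

End Glue.
End Tent.

Section AvoidLine.
Variables (R : realType) (X : normedModType R).

Lemma line_inj (a u : X) (s t : R) : u != 0 -> a - s *: u = a - t *: u -> s = t.
Proof.
move=> u0 /(congr1 (fun z => a - z)); rewrite !subKr => /eqP.
by rewrite -subr_eq0 -scalerBl scaler_eq0 (negbTE u0) orbF subr_eq0 => /eqP.
Qed.

(* A line meets a finite set l in finitely many points, so on every interval
   (0, rho] there are parameters t with a - t *: u outside l; we even get a
   whole initial interval (0, d] of them, which makes the induction work. *)
Lemma line_avoids_finite (a u : X) (l : seq X) (rho : R) : u != 0 -> 0 < rho ->
  exists2 d : R, 0 < d <= rho &
    forall t, 0 < t <= d -> a - t *: u \notin l.
Proof.
move=> u0 rho0; elim: l => [|y l [d /andP[d0 drho] avoid_l]].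
  by exists rho; rewrite ?rho0 ?lexx.
have [[t0 /andP[t00 t0d] hit]|miss] :=
  pselect (exists2 t0, 0 < t0 <= d & a - t0 *: u = y).
  exists (t0 / 2); first by apply/andP; split; lra.
  move=> t /andP[t0' tt0]; rewrite inE negb_or; apply/andP; split.
    by apply/eqP; rewrite -hit => /(line_inj u0); lra.
  by apply: avoid_l; apply/andP; split; lra.
exists d; first by rewrite d0.
move=> t td; rewrite inE negb_or avoid_l // andbT.
by apply/eqP => hit; apply: miss; exists t.
Qed.

End AvoidLine.

Lemma choice_with_history (T : Type) (P : seq T -> T -> Prop) :
  (forall l, exists t, P l t) ->
  exists w : nat -> T, forall n, P (mkseq w n) (w n).
Proof.
move=> exP; pose next l := proj1_sig (cid (exP l)).
pose hist n := iter n (fun l => rcons l (next l)) [::].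
exists (fun n => next (hist n)) => n.
have -> : mkseq (fun n => next (hist n)) n = hist n.
  by elim: n => // n IH; rewrite mkseqS IH.
exact: proj2_sig (cid (exP (hist n))).
Qed.

Lemma separating_heights (R : realType) (X : normedModType R)
    (a : nat -> X) (u : X) (rho : nat -> R) :
  u != 0 -> (forall n, 0 < rho n) ->
  exists w : nat -> R, forall n, 0 < w n <= rho n /\
    forall m, m <> n -> a n - w n *: u <> a m - w m *: u.
Proof.
move=> u0 rho0.
pose fresh (l : seq R) (t : R) := 0 < t <= rho (size l) /\
  forall m, (m < size l)%N -> a (size l) - t *: u != a m - nth 0 l m *: u.
have [w hw] : exists w : nat -> R, forall n, fresh (mkseq w n) (w n).
  apply: choice_with_history => l.
  have [d /andP[d0 drho] avoid] := line_avoids_finite (a (size l))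
    [seq a m - nth 0 l m *: u | m <- iota 0 (size l)] u0 (rho0 (size l)).
  exists d; split; first by rewrite d0.
  move=> m ml; apply: contraNneq (avoid d _) => [->|]; last by rewrite d0 lexx.
  by apply: (map_f (fun m => a m - nth 0 l m *: u)); rewrite mem_iota.
have older n m : (m < n)%N -> a n - w n *: u <> a m - w m *: u.
  move=> mn; have [_] := hw n; rewrite size_mkseq => /(_ m mn) /eqP.
  by rewrite nth_mkseq.
exists w => n; split; first by have [+ _] := hw n; rewrite size_mkseq.
move=> m /eqP; rewrite neq_ltn => /orP[mn|nm]; first exact: older _ _ mn.
by move=> /esym; apply: older _ _ nm.
Qed.

Lemma disjoint_balls_dist (R : realType) (M : metricType R) (c d : M) (rc rd : R) :
  ball c rc `&` ball d rd = set0 -> 0 < rd -> rc <= mdist c d.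
Proof.
move=> disj rd0; rewrite leNgt; apply/negP => dc.
have : (ball c rc `&` ball d rd) d by rewrite !ballEmdist /= mdistxx.
by rewrite disj.
Qed.

Theorem lemma2p6 (R : realType) (M : metricType R) (X : completeNormedModType R)
  (x : nat -> M) (r : nat -> R)
  (hX : exists v : X, v != 0)
  (hr : forall n, 0 < r n)
  (hdisj : forall n m : nat, n <> m -> ball (x n) (r n) `&` ball (x m) (r m) = set0) :
  forall (F : M -> X), lipschitz_m F ->
  forall eps : R, 0 < eps ->
  exists G : M -> X,
    [/\ lipschitz_m G,
        lipconst_lt (fun p => F p - G p) eps &
        forall n m : nat, n <> m -> G (x n) <> G (x m)].
Proof.
move=> F [k Fk] eps eps0.
have [u nu] := exists_vector_of_norm hX (ltW (divr_gt0 eps0 (ltr0Sn R 1))).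
have u0 : u != 0 by rewrite -normr_eq0 nu; lra.
have [w hw] := separating_heights (F \o x) u0 (fun n => divr_gt0 (hr n) (ltr0Sn R 1)).
have w_sep n m : n <> m -> w n + w m <= mdist (x n) (x m).
  move=> nm; have := disjoint_balls_dist (hdisj _ _ nm) (hr m).
  have := disjoint_balls_dist (hdisj _ _ (nesym nm)) (hr n); rewrite metric_sym.
  by have [/andP[_ +] _] := hw n; have [/andP[_ +] _] := hw m; lra.
pose phi := glued_tent x w.
have phi_lip := glued_tent_lip w_sep.
exists (fun p => F p - phi p *: u); split.
- by exists (k + eps / 2); rewrite -nu; apply: klipschitzB Fk (klipschitz_scale _ phi_lip).
- exists (eps / 2); first lra.
  rewrite -nu; under eq_fun do rewrite subKr; exact: klipschitz_scale.
- have w_ge0 n : 0 <= w n by have [/andP[/ltW]] := hw n.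
  move=> n m nm; rewrite /phi !glued_tent_center //.
  exact: (proj2 (hw n) m (nesym nm)).
Qed.
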